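(* Assume properties (P.4), (P.5) and (P.6) hold. Let $N\in\mathbb N$ and let $\Omega\in\mathscr A$ be an $N$-admissible set with $\mathfrak m(\Omega)\in(0,+\infty)$. Then $\Omega$ has an $N$-Cheeger set, i.e. $\mathscr C_N(\Omega)\neq\emptyset$.
   Context: $(X,\mathscr A,\mathfrak m)$ is a non-negative $\sigma$-finite measure space. For $A,B\in\mathscr A$, ''$A\subset B$'' means $\mathfrak m(A\setminus B)=0$. $P\colon\mathscr A\to[0,+\infty]$ is a proper functional (i.e. $P(A)<+\infty$ for some $A\in\mathscr A$), called the perimeter. Convergence of sets in $L^1(X,\mathfrak m)$ means $L^1$ convergence of their characteristic functions. Properties: (P.4) $P$ is lower semicontinuous with respect to $L^1(X,\mathfrak m)$ convergence: if $\chi_{E_k}\to\chi_E$ in $L^1(X,\mathfrak m)$ then $P(E)\le\liminf_k P(E_k)$. (P.5) For every $c\ge0$, the set $\{\chi_E: E\in\mathscr A,\ P(E)\le c\}$ is compact in $L^1(X,\mathfrak m)$. (P.6) There is a function $f\colon(0,+\infty)\to(0,+\infty)$ with $\lim_{\varepsilon\to0^+}f(\varepsilon)=+\infty$ such that, whenever $\varepsilon>0$ and $E\in\mathscr A$ with $\mathfrak m(E)\le\varepsilon$, one has $P(E)\ge f(\varepsilon)\,\mathfrak m(E)$. Clusters: for $N\in\mathbb N$, an $N$-cluster is a family $\mathcal E=\{\mathcal E(i)\}_{i=1}^N\subset\mathscr A$ with $0<\mathfrak m(\mathcal E(i))<+\infty$ and $P(\mathcal E(i))<+\infty$ for all $i$,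 and $\mathfrak m(\mathcal E(i)\cap\mathcal E(j))=0$ for $i\neq j$. A set $\Omega\in\mathscr A$ is $N$-admissible if there is an $N$-cluster all of whose chambers are contained in $\Omega$. For $N$-admissible $\Omega$, the $N$-Cheeger constant is $h_N(\Omega)=\inf\{\sum_{i=1}^N P(\mathcal E(i))/\mathfrak m(\mathcal E(i)) : \mathcal E \text{ an } N\text{-cluster with all chambers contained in }\Omega\}$; an $N$-cluster in $\Omega$ attaining this infimum is an $N$-Cheeger set of $\Omega$, and $\mathscr C_N(\Omega)$ denotes the collection of all of them. *)

From HB Require Import structures.
From mathcomp Require Import all_boot all_order all_algebra.
From mathcomp Require Import all_classical all_reals all_analysis.
Set Implicit Arguments. Unset Strict Implicit. Unset Printing Implicit Defensive.
Import Order.TTheory GRing.Theory Num.Theory.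
Import numFieldNormedType.Exports.
Local Open Scope classical_set_scope.
Local Open Scope ring_scope.

Section Defs.
Context (d : measure_display) (T : measurableType d) (R : realType).
Variables (mu : {measure set T -> \bar R}) (P : set T -> \bar R).

Definition msubset (A B : set T) : Prop := mu (A `\` B) = 0%E.

(* chi_{Ek} -> chi_E in L^1(X, mu):  int |chi_{Ek} - chi_E| dmu = mu (Ek Δ E) -> 0 *)
Definition L1_cvg (Ek : nat -> set T) (E : set T) : Prop :=
  (fun k => mu ((Ek k `\` E) `|` (E `\` Ek k))) @ \oo --> 0%E.

Definition perimeter_functional : Prop :=
  (forall A, measurable A -> (0 <= P A)%E) /\
  (exists A, measurable A /\ (P A < +oo)%E).

Definition P4 : Prop :=
  forall (Ek : nat -> set T) (E : set T),
    (forall k, measurable (Ek k)) -> measurable E ->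
    L1_cvg Ek E -> (P E <= limn_einf (fun k => P (Ek k)))%E.

Definition P5 : Prop :=
  forall c : R, 0 <= c ->
  forall Ek : nat -> set T,
    (forall k, measurable (Ek k) /\ (P (Ek k) <= c%:E)%E) ->
    exists phi : nat -> nat, (forall n, (phi n < phi n.+1)%N) /\
      exists E : set T, [/\ measurable E, (P E <= c%:E)%E &
                            L1_cvg (fun k => Ek (phi k)) E].

Definition P6 : Prop :=
  exists f : R -> R,
    [/\ (forall e, 0 < e -> 0 < f e),
        f x @[x --> 0^'+] --> +oo &
        forall (e : R) (E : set T), 0 < e -> measurable E ->
          (mu E <= e%:E)%E -> ((f e)%:E * mu E <= P E)%E].

Definition is_cluster (N : nat) (E : 'I_N -> set T) : Prop :=
  (forall i, [/\ measurable (E i), (0 < mu (E i))%E, (mu (E i) < +oo)%E &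
                 (P (E i) < +oo)%E]) /\
  (forall i j, i != j -> mu (E i `&` E j) = 0%E).

Definition cluster_in (N : nat) (Omega : set T) (E : 'I_N -> set T) : Prop :=
  is_cluster E /\ forall i, msubset (E i) Omega.

Definition admissible (N : nat) (Omega : set T) : Prop :=
  exists E : 'I_N -> set T, cluster_in Omega E.

(* sum_i P(E(i)) / m(E(i)); all quantities are finite for clusters *)
Definition cheeger_ratio (N : nat) (E : 'I_N -> set T) : R :=
  \sum_(i < N) (fine (P (E i)) / fine (mu (E i))).

Definition cheeger_constant (N : nat) (Omega : set T) : \bar R :=
  ereal_inf [set (cheeger_ratio E)%:E | E in [set E : 'I_N -> set T | cluster_in Omega E]].

Definition cheeger_sets (N : nat) (Omega : set T) : set ('I_N -> set T) :=
  [set E | cluster_in Omega E /\ (cheeger_ratio E)%:E = cheeger_constant N Omega].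

End Defs.
Arguments admissible {d T R} mu P N Omega.
Arguments cheeger_sets {d T R} mu P N Omega.
Arguments cheeger_constant {d T R} mu P N Omega.

From HB Require Import structures.
From mathcomp Require Import all_boot all_order all_algebra.
From mathcomp Require Import all_classical all_reals all_analysis.
From mathcomp Require Import ring lra.

Set Implicit Arguments.
Unset Strict Implicit.
Unset Printing Implicit Defensive.

Import Order.TTheory GRing.Theory Num.Theory.
Import numFieldNormedType.Exports.
Local Open Scope classical_set_scope.
Local Open Scope ring_scope.

(* Since Omega is admissible, the Cheeger constant h is finite and there is a
   minimizing sequence of clusters.  Their ratios are bounded by h + 1, which
   bounds every chamber's perimeter by (h + 1) m(Omega) and, through (P.6),
   every chamber's volume from below by a uniform e > 0.  Compactness (P.5),
   applied chamber by chamber, extracts an L^1-convergent subsequence.  L^1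
   limits keep inclusion in Omega and negligible overlaps, and the volume bound
   keeps them non-null, so the limit is again a cluster in Omega.  Finally (P.4)
   and the upper semicontinuity of the volume make each ratio P/m lower
   semicontinuous, so the limit cluster attains h. *)

Lemma lt_limn_einf (R : realType) (u : (\bar R)^nat) (x : \bar R) :
  (x < limn_einf u)%E -> \forall k \near \oo, (x < u k)%E.
Proof.
rewrite limn_einf_lim; have -> : limn (einfs u) = ereal_sup (range (einfs u)).
  by apply/cvg_lim => //; exact: cvg_einfs_sup.
move=> /ereal_sup_gt [_ [n _ <-] xl]; exists n => // k /= nk.
by apply: (lt_le_trans xl); apply: ereal_inf_lbound; exists k.
Qed.

Lemma cvge0_lt (R : realType) (u : (\bar R)^nat) (e : R) :
  u @ \oo --> 0%E -> 0 < e -> \forall k \near \oo, (u k < e%:E)%E.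
Proof.
move=> /fine_cvgP [ufin ucvg] e0; near=> k.
have /fineK <- : u k \is a fin_num by near: k.
by rewrite lte_fin; near: k; exact: cvgr_lt ucvg _ e0.
Unshelve. all: by end_near. Qed.

Lemma increasing_nat_ge (phi : nat -> nat) :
  (forall n, (phi n < phi n.+1)%N) -> forall n, (n <= phi n)%N.
Proof. by move=> phiS; elim=> // n IH; exact: leq_ltn_trans IH (phiS n). Qed.

Lemma cvg_increasing_comp (T : Type) (F : set_system T) (u : nat -> T) (phi : nat -> nat) :
  (forall n, (phi n < phi n.+1)%N) -> u @ \oo --> F -> (u \o phi) @ \oo --> F.
Proof.
move=> phiS uF; apply: cvg_comp uF => A [n _ An]; exists n => // k /= nk.
exact/An/(leq_trans nk)/increasing_nat_ge.
Qed.

Section L1_convergence.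
Context (d : measure_display) (T : measurableType d) (R : realType).
Variable mu : {measure set T -> \bar R}.
Implicit Types (A B : set T) (Ek Fk : nat -> set T).

Lemma msubset_measure_le A B : measurable A -> measurable B ->
  msubset mu A B -> (mu A <= mu B)%E.
Proof.
move=> mA mB AB; rewrite (measureDI mu mA mB) [X in (X + _)%E]AB add0e.
by apply: le_measure; rewrite ?inE //; exact: measurableI.
Qed.

Lemma L1_cvg_subseq Ek E (phi : nat -> nat) :
  (forall n, (phi n < phi n.+1)%N) -> L1_cvg mu Ek E -> L1_cvg mu (Ek \o phi) E.
Proof. exact: cvg_increasing_comp. Qed.

Lemma L1_cvg_setD_lt Ek E : (forall k, measurable (Ek k)) -> measurable E ->
  L1_cvg mu Ek E -> forall e : R, 0 < e ->
  \forall k \near \oo, (mu (Ek k `\` E) < e%:E)%E /\ (mu (E `\` Ek k) < e%:E)%E.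
Proof.
move=> mEk mE EkE e e0; apply: filterS (cvge0_lt EkE e0) => k Ek_lt.
have mD1 : measurable (Ek k `\` E) by exact: measurableD.
have mD2 : measurable (E `\` Ek k) by exact: measurableD.
have mU : measurable (Ek k `\` E `|` E `\` Ek k) by exact: measurableU.
split; apply: le_lt_trans Ek_lt; apply: le_measure; rewrite ?inE // => x Dx;
  first [by left | by right].
Qed.

Lemma L1_cvg_measure_le Ek E : (forall k, measurable (Ek k)) -> measurable E ->
  L1_cvg mu Ek E -> forall e : R, 0 < e ->
  \forall k \near \oo, (mu (Ek k) <= mu E + e%:E)%E.
Proof.
move=> mEk mE EkE e e0; apply: filterS (L1_cvg_setD_lt mEk mE EkE e0) => k [EkE_lt _].
rewrite (measureDI mu (mEk k) mE) addeC leeD ?(ltW EkE_lt) //.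
by apply: le_measure; rewrite ?inE //; exact: measurableI.
Qed.

Lemma L1_cvg_measure_ge Ek E (e : \bar R) : (forall k, measurable (Ek k)) ->
  measurable E -> L1_cvg mu Ek E -> (forall k, e <= mu (Ek k))%E -> (e <= mu E)%E.
Proof.
move=> mEk mE EkE e_le; apply/lee_addgt0Pr => r r0.
have [k Ek_le] := filter_ex (L1_cvg_measure_le mEk mE EkE r0).
exact: le_trans (e_le k) Ek_le.
Qed.

Lemma L1_cvg_msubset Ek E (O : set T) : (forall k, measurable (Ek k)) ->
  measurable E -> measurable O -> L1_cvg mu Ek E ->
  (forall k, msubset mu (Ek k) O) -> msubset mu E O.
Proof.
move=> mEk mE mO EkE EkO; apply/eqP; rewrite eq_le measure_ge0 andbT.
apply/lee_addgt0Pr => e e0; rewrite add0e.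
have [k [_ EEk_lt]] := filter_ex (L1_cvg_setD_lt mEk mE EkE e0).
have mEEk : measurable (E `\` Ek k) by exact: measurableD.
have mEkO : measurable (Ek k `\` O) by exact: measurableD.
apply: le_trans (_ : mu ((E `\` Ek k) `|` (Ek k `\` O)) <= _)%E.
  apply: le_measure; rewrite ?inE; [exact: measurableD | exact: measurableU |].
  by move=> x [Ex Ox]; have [Ekx|Ekx] := pselect (Ek k x); [right | left].
apply: le_trans (measureU2 mu mEEk mEkO) _.
by rewrite [X in (_ + X)%E]EkO adde0 ltW.
Qed.

Lemma L1_cvg_disjoint Ek Fk E F : (forall k, measurable (Ek k)) ->
  (forall k, measurable (Fk k)) -> measurable E -> measurable F ->
  L1_cvg mu Ek E -> L1_cvg mu Fk F ->
  (forall k, mu (Ek k `&` Fk k) = 0%E) -> mu (E `&` F) = 0%E.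
Proof.
move=> mEk mFk mE mF EkE FkF EFk0; apply/eqP; rewrite eq_le measure_ge0 andbT.
apply/lee_addgt0Pr => e e0; rewrite add0e.
have e20 : 0 < e / 2 by rewrite divr_gt0.
have [k [[_ EEk_lt] [_ FFk_lt]]] := filter_ex
  (filterI (L1_cvg_setD_lt mEk mE EkE e20) (L1_cvg_setD_lt mFk mF FkF e20)).
have mEEk : measurable (E `\` Ek k) by exact: measurableD.
have mFFk : measurable (F `\` Fk k) by exact: measurableD.
have mEFk : measurable (Ek k `&` Fk k) by exact: measurableI.
have mU : measurable ((E `\` Ek k) `|` (F `\` Fk k)) by exact: measurableU.
apply: le_trans (_ : mu ((E `\` Ek k) `|` (F `\` Fk k) `|` (Ek k `&` Fk k)) <= _)%E.
  apply: le_measure; rewrite ?inE; [exact: measurableI | exact: measurableU |].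
  move=> x [Ex Fx]; have [Ekx|Ekx] := pselect (Ek k x); last by left; left.
  by have [Fkx|Fkx] := pselect (Fk k x); [right | left; right].
apply: le_trans (measureU2 mu mU mEFk) _.
rewrite [X in (_ + X)%E]EFk0 adde0; apply: le_trans (measureU2 mu mEEk mFFk) _.
by rewrite [e]splitr EFinD leeD ?ltW.
Qed.
End L1_convergence.

Lemma ler_div_sub (R : realFieldType) (p m p' m' dl : R) :
  0 <= p -> 0 < m -> 0 < dl -> 0 <= p' -> 0 < m' ->
  p - dl <= p' -> m' <= m + dl -> p / m - dl * ((p + m) / m ^+ 2) <= p' / m'.
Proof.
move=> p0 m0 dl0 p'0 m'0 pp' m'm.
have mdl0 : 0 < m + dl by lra.
have ->: p / m - dl * ((p + m) / m ^+ 2) = (p * m - dl * (p + m)) / m ^+ 2.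
  by field; rewrite gt_eqF.
apply: (@le_trans _ _ ((p - dl) / (m + dl))).
  by rewrite ler_pdivrMr ?exprn_gt0 // mulrAC ler_pdivlMr //; nra.
have [pdl0|pdl0] := lerP (p - dl) 0.
  by apply: (le_trans (y := 0)); [rewrite pmulr_lle0 ?invr_gt0 | exact: divr_ge0 (ltW _)].
by rewrite ler_pdivrMr // mulrAC ler_pdivlMr //; nra.
Qed.

Lemma div_lower_semicontinuous (R : realFieldType) (p m eps : R) :
  0 <= p -> 0 < m -> 0 < eps ->
  exists2 dl, 0 < dl & forall p' m', 0 <= p' -> 0 < m' ->
    p - dl <= p' -> m' <= m + dl -> p / m <= p' / m' + eps.
Proof.
move=> p0 m0 eps0; have pm0 : 0 < p + m by lra.
exists (eps * m ^+ 2 / (p + m)); first by rewrite !mulr_gt0 ?invr_gt0 ?exprn_gt0.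
move=> p' m' p'0 m'0 pp' m'm; rewrite -lerBlDr.
suff <- : eps * m ^+ 2 / (p + m) * ((p + m) / m ^+ 2) = eps.
  by apply: ler_div_sub; rewrite ?mulr_gt0 ?invr_gt0 ?exprn_gt0.
by field; rewrite !gt_eqF.
Qed.

Section chambers.
Context (d : measure_display) (T : measurableType d) (R : realType).
Variables (mu : {measure set T -> \bar R}) (P : set T -> \bar R).
Hypothesis P_ge0 : forall A, measurable A -> (0 <= P A)%E.

Definition is_chamber (A : set T) :=
  [/\ measurable A, (0 < mu A)%E, (mu A < +oo)%E & (P A < +oo)%E].

Definition chamber_ratio (A : set T) : R := fine (P A) / fine (mu A).

Lemma chamber_measureE A : is_chamber A -> mu A = (fine (mu A))%:E.
Proof. by case=> _ mu_gt0 mu_lt _; rewrite fineK // ge0_fin_numE ?ltW. Qed.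

Lemma chamber_perimeterE A : is_chamber A -> P A = (fine (P A))%:E.
Proof. by case=> mA _ _ P_lt; rewrite fineK // ge0_fin_numE ?P_ge0. Qed.

Lemma chamber_measure_gt0 A : is_chamber A -> 0 < fine (mu A).
Proof. by case=> _ mu_gt0 mu_lt _; apply: fine_gt0; rewrite mu_gt0 mu_lt. Qed.

Lemma chamber_ratio_ge0 A : is_chamber A -> 0 <= chamber_ratio A.
Proof.
move=> [mA _ _ _]; apply: divr_ge0; apply: fine_ge0; last exact: measure_ge0.
exact: P_ge0.
Qed.

Lemma chamber_perimeter_le A (r : R) :
  is_chamber A -> chamber_ratio A <= r -> (P A <= r%:E * mu A)%E.
Proof.
move=> cA; rewrite (chamber_perimeterE cA) (chamber_measureE cA) -EFinM lee_fin.
by rewrite -ler_pdivrMr // chamber_measure_gt0.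
Qed.

(* If m(A) <= e with c < f(e), then f(e) m(A) <= P(A) <= c m(A) forces m(A) = 0. *)
Lemma chamber_measure_bound : P6 mu P -> forall c : R,
  exists2 e : R, 0 < e & forall A, is_chamber A -> (P A <= c%:E * mu A)%E -> (e%:E < mu A)%E.
Proof.
move=> [f [f_gt0 f_cvg P_ge_f]] c.
have [e [e0 c_lt_fe]] : exists e : R, 0 < e /\ c < f e.
  have : \forall x \near (0:R)^'+, 0 < x /\ c < f x.
    by apply: filterI; [exact: nbhs_right_gt | exact: (cvgryPgt _).1 f_cvg c].
  by move=> /filter_ex [x ?]; exists x.
exists e => // A cA PA_le; rewrite ltNge; apply/negP => muA_le.
have [mA _ _ _] := cA; have := P_ge_f e A e0 mA muA_le.
rewrite (chamber_perimeterE cA) in PA_le *; rewrite (chamber_measureE cA) in PA_le *.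
rewrite -!EFinM !lee_fin in PA_le * => fe_le; have := chamber_measure_gt0 cA; nra.
Qed.

Lemma chamber_ratio_lsc : P4 mu P -> forall Ek E,
  (forall k, is_chamber (Ek k)) -> is_chamber E -> L1_cvg mu Ek E ->
  forall eps : R, 0 < eps ->
  \forall k \near \oo, chamber_ratio E <= chamber_ratio (Ek k) + eps.
Proof.
move=> hP4 Ek E cEk cE EkE eps eps0.
have mEk k : measurable (Ek k) by case: (cEk k).
have [mE _ _ _] := cE.
have PE_ge0 : 0 <= fine (P E) by apply/fine_ge0/P_ge0.
have [dl dl0 ratio_le] := div_lower_semicontinuous PE_ge0 (chamber_measure_gt0 cE) eps0.
have P_near : \forall k \near \oo, ((fine (P E) - dl)%:E < P (Ek k))%E.
  apply: lt_limn_einf; apply: lt_le_trans (hP4 _ _ mEk mE EkE).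
  by rewrite (chamber_perimeterE cE) lte_fin ltrBlDr ltrDl.
have mu_near := L1_cvg_measure_le mEk mE EkE dl0.
near=> k; apply: ratio_le; [exact/fine_ge0/P_ge0 | exact: chamber_measure_gt0 | |].
- by rewrite -lee_fin -(chamber_perimeterE (cEk k)) ltW //; near: k.
- by rewrite -lee_fin EFinD -(chamber_measureE (cEk k)) -(chamber_measureE cE); near: k.
Unshelve. all: by end_near. Qed.
End chambers.

Section clusters.
Context (d : measure_display) (T : measurableType d) (R : realType).
Variables (mu : {measure set T -> \bar R}) (P : set T -> \bar R).
Hypothesis P_ge0 : forall A, measurable A -> (0 <= P A)%E.
Variable N : nat.
Implicit Types (E L : 'I_N -> set T) (C : nat -> 'I_N -> set T) (Omega : set T).

Lemma cluster_chamber E i : is_cluster mu P E -> is_chamber mu P (E i).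
Proof. by case=> /(_ i). Qed.

Lemma cheeger_ratio_ge0 E : is_cluster mu P E -> 0 <= cheeger_ratio mu P E.
Proof.
by move=> cE; apply: sumr_ge0 => i _; exact/chamber_ratio_ge0/cluster_chamber.
Qed.

Lemma chamber_ratio_le_cheeger_ratio E i :
  is_cluster mu P E -> chamber_ratio mu P (E i) <= cheeger_ratio mu P E.
Proof.
move=> cE; rewrite /cheeger_ratio (bigD1 i) //= lerDl.
by apply: sumr_ge0 => j _; exact/chamber_ratio_ge0/cluster_chamber.
Qed.

Lemma cluster_in_perimeter_le Omega E i (r : R) : measurable Omega ->
  (mu Omega < +oo)%E -> cluster_in mu P Omega E -> cheeger_ratio mu P E <= r ->
  (P (E i) <= (r * fine (mu Omega))%:E)%E.
Proof.
move=> mO muO_lt [cE EO] ratio_le; have cEi := cluster_chamber i cE.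
have ratioEi_le := le_trans (chamber_ratio_le_cheeger_ratio i cE) ratio_le.
apply: le_trans (chamber_perimeter_le P_ge0 cEi ratioEi_le) _.
rewrite EFinM fineK ?ge0_fin_numE //; apply: lee_wpmul2l.
- by rewrite lee_fin; exact: le_trans (cheeger_ratio_ge0 cE) ratio_le.
- by apply: msubset_measure_le; first by case: cEi.
Qed.

Lemma cluster_measure_bound : P6 mu P -> forall r : R,
  exists2 e : R, 0 < e & forall E, is_cluster mu P E -> cheeger_ratio mu P E <= r ->
    forall i, (e%:E < mu (E i))%E.
Proof.
move=> hP6 r; have [e e0 mu_gt] := chamber_measure_bound P_ge0 hP6 r.
exists e => // E cE ratio_le i; have cEi := cluster_chamber i cE.
apply: (mu_gt _ cEi) (chamber_perimeter_le P_ge0 cEi _).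
exact: le_trans (chamber_ratio_le_cheeger_ratio i cE) ratio_le.
Qed.

Lemma cheeger_constant_le Omega E :
  cluster_in mu P Omega E -> (cheeger_constant mu P N Omega <= (cheeger_ratio mu P E)%:E)%E.
Proof. by move=> cE; apply: ereal_inf_lbound; exists E. Qed.

Lemma cheeger_constant_fin_num Omega :
  admissible mu P N Omega -> cheeger_constant mu P N Omega \is a fin_num.
Proof.
move=> [E cE]; rewrite ge0_fin_numE; last first.
  by apply: le_ereal_inf_tmp => _ [F [cF _] <-]; rewrite lee_fin cheeger_ratio_ge0.
by apply: le_lt_trans (cheeger_constant_le cE) _; rewrite ltry.
Qed.

Lemma cheeger_minimizing_seq Omega : admissible mu P N Omega ->
  exists C, forall k, cluster_in mu P Omega (C k) /\
    cheeger_ratio mu P (C k) < fine (cheeger_constant mu P N Omega) + k.+1%:R^-1.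
Proof.
move=> /cheeger_constant_fin_num h_fin.
suff /choice[C minC] : forall k : nat, exists E, cluster_in mu P Omega E /\
    cheeger_ratio mu P E < fine (cheeger_constant mu P N Omega) + k.+1%:R^-1.
  by exists C.
move=> k; have : (cheeger_constant mu P N Omega <
        (fine (cheeger_constant mu P N Omega) + k.+1%:R^-1)%:E)%E.
  by rewrite EFinD fineK // lteDl // lte_fin invr_gt0.
by move=> /ereal_inf_lt [_ [C cC <-]]; rewrite lte_fin; exists C.
Qed.

(* (P.5) is applied to one chamber at a time, refining the subsequence. *)
Lemma P5_family : P5 mu P -> forall C (c : R), 0 <= c ->
  (forall k i, measurable (C k i) /\ (P (C k i) <= c%:E)%E) ->
  exists phi : nat -> nat, (forall n, (phi n < phi n.+1)%N) /\
    exists L, forall i, [/\ measurable (L i), (P (L i) <= c%:E)%E &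
                           L1_cvg mu (fun k => C (phi k) i) (L i)].
Proof.
move=> hP5 C c c0 PC_le.
suff /(_ N) [phi [phiS [L CL]]] : forall n, exists phi : nat -> nat,
    (forall n, (phi n < phi n.+1)%N) /\ exists L, forall i : 'I_N, (i < n)%N ->
    [/\ measurable (L i), (P (L i) <= c%:E)%E & L1_cvg mu (fun k => C (phi k) i) (L i)].
  by exists phi; split=> //; exists L => i; exact: CL.
elim=> [|n [phi [phiS [L CL]]]]; first by exists id; split=> //; exists (fun=> set0).
have [nN|Nn] := ltnP n N; last first.
  by exists phi; split=> //; exists L => i ni; apply: CL; exact: leq_trans (ltn_ord i) Nn.
pose i0 : 'I_N := Ordinal nN.
have [psi [psiS [L0 [mL0 PL0 CL0]]]] := hP5 _ c0 (fun k => C (phi k) i0) (fun k => PC_le (phi k) i0).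
exists (phi \o psi); split; first by move=> m; exact: (homo_ltn ltn_trans phiS).
exists (fun i => if i == i0 then L0 else L i) => i; rewrite ltnS leq_eqVlt.
have [->|/eqP i_neq] := eqVneq i i0; first by [].
have ->: (i == n :> nat) = false by apply/eqP => in_; apply: i_neq; exact: val_inj.
by move=> /CL [mLi PLi CLi]; split=> //; exact: L1_cvg_subseq CLi.
Qed.

Lemma cluster_in_limit Omega C L (e c : R) : measurable Omega -> (mu Omega < +oo)%E ->
  0 < e -> (forall k, cluster_in mu P Omega (C k)) -> (forall k i, (e%:E < mu (C k i))%E) ->
  (forall i, [/\ measurable (L i), (P (L i) <= c%:E)%E & L1_cvg mu (fun k => C k i) (L i)]) ->
  cluster_in mu P Omega L.
Proof.
move=> mO muO_lt e0 cC muC_gt CL_lim.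
have mL i : measurable (L i) by have [] := CL_lim i.
have CL i : L1_cvg mu (fun k => C k i) (L i) by have [] := CL_lim i.
have mC k i : measurable (C k i) by have [] := cluster_chamber i (cC k).1.
have LO i : msubset mu (L i) Omega.
  by apply: L1_cvg_msubset (CL i) _ => // k; exact: (cC k).2.
split=> //; split=> [i|i j ij].
  split=> //.
  - apply: lt_le_trans (L1_cvg_measure_ge (mC^~ i) (mL i) (CL i) (fun k => ltW (muC_gt k i))).
    by rewrite lte_fin.
  - by apply: le_lt_trans muO_lt; exact: msubset_measure_le.
  - by have [_ PL_le _] := CL_lim i; exact: le_lt_trans PL_le (ltry _).
apply: L1_cvg_disjoint (CL i) (CL j) _ => // k.
by have [[_ +] _] := cC k; apply.
Qed.

Lemma cheeger_ratio_lsc : P4 mu P -> forall C L,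
  (forall k, is_cluster mu P (C k)) -> is_cluster mu P L ->
  (forall i, L1_cvg mu (fun k => C k i) (L i)) -> forall eps : R, 0 < eps ->
  \forall k \near \oo, cheeger_ratio mu P L <= cheeger_ratio mu P (C k) + eps.
Proof.
move=> hP4 C L cC cL CL eps eps0.
have eps'0 : 0 < eps / N.+1%:R by rewrite divr_gt0.
have ratio_near i := chamber_ratio_lsc P_ge0 hP4
  (fun k => cluster_chamber i (cC k)) (cluster_chamber i cL) (CL i) eps'0.
apply: filterS (filter_forall _ ratio_near) => k ratio_le.
apply: le_trans (ler_sum _ (fun i _ => ratio_le i)) _.
rewrite big_split /= sumr_const card_ord lerD2l -[_ *+ N]mulr_natr -mulrA.
by rewrite ger_pMr // mulrC ler_pdivrMr ?ltr0n // mul1r ler_nat.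
Qed.

Lemma cheeger_ratio_limit_le : P4 mu P -> forall C L (r : R),
  (forall k, is_cluster mu P (C k)) -> is_cluster mu P L ->
  (forall i, L1_cvg mu (fun k => C k i) (L i)) ->
  (forall k, cheeger_ratio mu P (C k) <= r + k.+1%:R^-1) -> cheeger_ratio mu P L <= r.
Proof.
move=> hP4 C L r cC cL CL ratioC_le; apply/ler_addgt0Pr => eps eps0.
have eps20 : 0 < eps / 2 by rewrite divr_gt0.
have [k [ratioL_le k_lt]] := filter_ex (filterI
  (cheeger_ratio_lsc hP4 cC cL CL eps20) (near_infty_natSinv_lt (PosNum eps20))).
apply: le_trans ratioL_le _; rewrite [X in r + X]splitr addrA lerD2r.
by apply: le_trans (ratioC_le k) _; rewrite lerD2l ltW.
Qed.
End clusters.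

Theorem theorem3p1 (d : measure_display) (T : measurableType d) (R : realType)
  (mu : {measure set T -> \bar R}) (P : set T -> \bar R)
  (hsigma : sigma_finite setT mu)
  (hP : perimeter_functional P)
  (hP4 : P4 mu P) (hP5 : P5 mu P) (hP6 : P6 mu P)
  (N : nat) (Omega : set T) (hOm : measurable Omega)
  (hadm : admissible mu P N Omega)
  (hpos : (0 < mu Omega)%E) (hfin : (mu Omega < +oo)%E) :
  cheeger_sets mu P N Omega !=set0.
Proof.
have P_ge0 := hP.1; have h_fin := cheeger_constant_fin_num P_ge0 hadm.
have [C minC] := cheeger_minimizing_seq P_ge0 hadm.
set h := fine (cheeger_constant mu P N Omega) in minC *.
have cC k : cluster_in mu P Omega (C k) := (minC k).1.
have ratioC_le k : cheeger_ratio mu P (C k) <= h + 1.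
  by apply/ltW/(lt_le_trans (minC k).2); rewrite lerD2l invf_le1 ?ler1n.
have c_ge0 : 0 <= (h + 1) * fine (mu Omega).
  apply: mulr_ge0; last exact/fine_ge0/measure_ge0.
  exact: le_trans (cheeger_ratio_ge0 P_ge0 (cC 0).1) (ratioC_le 0).
have PC_le k i : measurable (C k i) /\ (P (C k i) <= ((h + 1) * fine (mu Omega))%:E)%E.
  split; first by have [] := cluster_chamber i (cC k).1.
  exact: (cluster_in_perimeter_le P_ge0 i hOm hfin (cC k) (ratioC_le k)).
have [e e0 muC_gt] := cluster_measure_bound P_ge0 N hP6 (h + 1).
have [phi [phiS [L CL]]] := P5_family hP5 c_ge0 PC_le.
have cL : cluster_in mu P Omega L.
  apply: (cluster_in_limit hOm hfin e0 (C := C \o phi)) CL => [k|k i]; first exact: cC.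
  exact: muC_gt (cC (phi k)).1 (ratioC_le _) i.
exists L; split=> //; apply/le_anti; rewrite cheeger_constant_le // andbT.
rewrite -(fineK h_fin) lee_fin.
apply: (cheeger_ratio_limit_le P_ge0 hP4 (C := C \o phi) (fun k => (cC (phi k)).1) cL.1).
  by move=> i; have [] := CL i.
move=> k; apply/ltW/(lt_le_trans (minC (phi k)).2).
by rewrite lerD2l lef_pV2 ?posrE // ler_nat ltnS increasing_nat_ge.
Qed.
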